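(* Let $F$ be a DQCNF and let $\varphi, \psi$ be autarkies of $F$. Then the composition $\varphi \circ \psi$ is again an autarky of $F$.
   Context: A DQCNF $F$ consists of a finite set $X$ of universal variables, a finite set $Y$ of existential variables (disjoint from $X$), for each $y \in Y$ a dependency set $D(y) \subseteq X$, and a matrix which is a CNF, i.e. a finite set of clauses over the variables $X \cup Y$. An autarky $\varphi$ of $F$ is a partial assignment that assigns to some set $\mathrm{var}(\varphi) \subseteq Y$ of existential variables boolean functions $\varphi(y)$ depending only on the variables in $D(y)$, such that every clause of $F$ containing a literal whose variable lies in $\mathrm{var}(\varphi)$ becomes a tautology after substituting $\varphi(y)$ for each $y \in \mathrm{var}(\varphi)$, i.e. evaluates to true under every assignment to all universal variables and all existential variables not in $\mathrm{var}(\varphi)$. For partial assignments $\varphi, \psi$ of this kind, the composition $\varphi \circ \psi$ is the partial assignment with $\mathrm{var}(\varphi \circ \psi) = \mathrm{var}(\varphi) \cup \mathrm{var}(\psi)$ which assigns $\psi(y)$ to $y \in \mathrm{var}(\psi)$ and $\varphi(y)$ to $y \in \mathrm{var}(\varphi) \setminus \mathrm{var}(\psi)$. *)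

From mathcomp Require Import all_boot.
Set Implicit Arguments. Unset Strict Implicit. Unset Printing Implicit Defensive.

(* A literal is a pair (v, b):
   (v, true) is the positive literal v, (v, false) is the negative literal ~v. *)
Definition literal (V : finType) := (V * bool)%type.

Record dqcnf (V : finType) := DQCNF {
  univ : {set V};
  exist : {set V};
  dep : V -> {set V};
  matrix : {set {set literal V}}
}.

Definition wf_dqcnf (V : finType) (F : dqcnf V) : Prop :=
  [disjoint univ F & exist F] /\
  (forall y, y \in exist F -> dep F y \subset univ F) /\
  (forall C, C \in matrix F -> forall l, l \in C -> l.1 \in univ F :|: exist F).

(* A partial assignment: a domain var(phi) and, for each y, a boolean function
   of a total assignment (only meaningful for y in the domain). *)
Record passign (V : finType) := PA {
  pdom : {set V};
  pfun : V -> (V -> bool) -> bool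
}.

Definition is_passign (V : finType) (F : dqcnf V) (phi : passign V) : Prop :=
  pdom phi \subset exist F /\
  (forall y, y \in pdom phi -> forall a a' : V -> bool,
      (forall x, x \in dep F y -> a x = a' x) -> pfun phi y a = pfun phi y a').

Definition subst_val (V : finType) (phi : passign V) (a : V -> bool) (v : V) : bool :=
  if v \in pdom phi then pfun phi v a else a v.

Definition autarky (V : finType) (F : dqcnf V) (phi : passign V) : Prop :=
  is_passign F phi /\
  forall C, C \in matrix F ->
    (exists l, l \in C /\ l.1 \in pdom phi) ->
    forall a : V -> bool, exists l, l \in C /\ subst_val phi a l.1 = l.2.

Definition compose (V : finType) (phi psi : passign V) : passign V :=
  PA (pdom phi :|: pdom psi)
     (fun y => if y \in pdom psi then pfun psi y else pfun phi y).

From mathcomp Require Import all_boot.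

Set Implicit Arguments.
Unset Strict Implicit.
Unset Printing Implicit Defensive.

(* Since autarkies only assign existential variables and their functions read
   only universal ones, substituting [phi o psi] is the same as substituting
   [phi] and then [psi].  A clause touched by [psi] is then satisfied by the
   autarky property of [psi] at the [phi]-substituted assignment; a clause
   touched only by [phi] is satisfied by [phi], and [psi] does not change it. *)

Section Composition.

Variables (V : finType) (F : dqcnf V).
Hypothesis wfF : wf_dqcnf F.

Lemma subst_val_notin (phi : passign V) a v :
  v \notin pdom phi -> subst_val phi a v = a v.
Proof. by rewrite /subst_val => /negbTE ->. Qed.

Lemma subst_val_univ (phi : passign V) a x :
  is_passign F phi -> x \in univ F -> subst_val phi a x = a x.
Proof.
case: wfF => disXY _ [sub_phi _] xX; apply: subst_val_notin.
by apply: contraL xX => /(subsetP sub_phi) xY; rewrite (disjointFl disXY xY).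
Qed.

Lemma pfun_eq_on_univ (psi : passign V) y a a' :
  is_passign F psi -> y \in pdom psi -> {in univ F, a =1 a'} ->
  pfun psi y a = pfun psi y a'.
Proof.
case: wfF => _ [depX _] [sub_psi dep_psi] ypsi eq_aa'.
apply: dep_psi => // x xD; apply: eq_aa'.
exact: subsetP (depX y (subsetP sub_psi y ypsi)) x xD.
Qed.

Lemma subst_val_compose (phi psi : passign V) a :
  is_passign F phi -> is_passign F psi ->
  subst_val (compose phi psi) a =1 subst_val psi (subst_val phi a).
Proof.
move=> pa_phi pa_psi v; rewrite /subst_val /= in_setU.
case vpsi: (v \in pdom psi); last by rewrite orbF.
rewrite orbT; apply: pfun_eq_on_univ => // x xX.
by rewrite -/(subst_val phi a x) subst_val_univ.
Qed.

Lemma is_passign_compose (phi psi : passign V) :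
  is_passign F phi -> is_passign F psi -> is_passign F (compose phi psi).
Proof.
move=> [sub_phi dep_phi] [sub_psi dep_psi]; split=> /=.
  by rewrite subUset sub_phi.
move=> y; rewrite in_setU; case: ifP => [ypsi _ | _]; first exact: dep_psi.
by rewrite orbF; apply: dep_phi.
Qed.

End Composition.

Theorem lemma2 (V : finType) (F : dqcnf V) (phi psi : passign V) :
  wf_dqcnf F -> autarky F phi -> autarky F psi -> autarky F (compose phi psi).
Proof.
move=> wfF [pa_phi aut_phi] [pa_psi aut_psi].
split; first exact: is_passign_compose.
move=> C CF [l [lC]]; rewrite in_setU => l_touched a.
have subst_phi_psi := subst_val_compose wfF a pa_phi pa_psi.
case: (pickP (fun l => (l \in C) && (l.1 \in pdom psi))) =>
    [l' /andP[l'C l'psi] | no_psi].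
  have [l2 [l2C sat_l2]] :=
    aut_psi C CF (ex_intro _ l' (conj l'C l'psi)) (subst_val phi a).
  by exists l2; rewrite subst_phi_psi.
have l_phi : l.1 \in pdom phi.
  by case/orP: l_touched => // l_psi; move: (no_psi l); rewrite lC l_psi.
have [l2 [l2C sat_l2]] := aut_phi C CF (ex_intro _ l (conj lC l_phi)) a.
exists l2; rewrite subst_phi_psi subst_val_notin //.
by move: (no_psi l2); rewrite l2C => /negbT.
Qed.
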